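(* Let $X=\{x_1,\ldots,x_n\}$ be a finite set and $k\ge 2$. For every set of medoids $M\subseteq X$ with $|M|=k$, there exists a dissimilarity $d$ on $X$ such that $M=\operatorname{arg\,max}_{M'}\tilde{S}(X,d,M')$, where $M'$ ranges over all subsets of $X$ of size $k$; that is, $M$ is the unique maximizer of the Average Medoid Silhouette (richness).
   Context: For a dissimilarity $d: X\times X\to\mathbb{R}$ and a set of medoids $M\subseteq X$, let $d_1(i)$ denote the distance from $x_i$ to its closest medoid in $M$ and $d_2(i)$ the distance to its second closest medoid in $M$. The Medoid Silhouette of $x_i$ is $\tilde{s}_i(X,d,M)=1-\frac{d_1(i)}{d_2(i)}$, with the convention $\tilde{s}_i=1$ when $d_1(i)=d_2(i)=0$; the Average Medoid Silhouette is $\tilde{S}(X,d,M)=\frac{1}{n}\sum_{i=1}^n\tilde{s}_i(X,d,M)$. *)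

From mathcomp Require Import all_boot all_order all_algebra.
From mathcomp Require Import reals.
Set Implicit Arguments. Unset Strict Implicit. Unset Printing Implicit Defensive.
Import Order.TTheory GRing.Theory Num.Theory.
Local Open Scope ring_scope.

Section MedoidSilhouette.
Variables (R : realType) (T : finType).

Definition dissimilarity (d : T -> T -> R) : Prop :=
  [/\ forall x y, 0 <= d x y, forall x y, d x y = d y x & forall x, d x x = 0].

Definition medoid_dists (d : T -> T -> R) (M : {set T}) (x : T) : seq R :=
  sort <=%R [seq d x m | m <- enum M].

Definition d1 d M x : R := nth 0 (medoid_dists d M x) 0.
Definition d2 d M x : R := nth 0 (medoid_dists d M x) 1.

Definition medoid_silhouette d M x : R :=
  if (d1 d M x == 0) && (d2 d M x == 0) then 1 else 1 - d1 d M x / d2 d M x.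

Definition avg_medoid_silhouette d M : R :=
  #|T|%:R^-1 * \sum_(x : T) medoid_silhouette d M x.

End MedoidSilhouette.

From mathcomp Require Import all_boot all_order all_algebra.
From mathcomp Require Import reals.
From mathcomp Require Import lra.
Import Order.TTheory GRing.Theory Num.Theory.
Local Open Scope ring_scope.

(* Pick a hub m0 in M and let d put every point at distance 1/2 from m0 if it
   lies in M and 1/4 otherwise, all other pairs of distinct points at distance
   1.  Under M each medoid has silhouette 1 and each other point has d1 = 1/4
   (to m0) and d2 = 1, so silhouette 3/4.  Under another k-set A all distances
   between distinct points lie in [1/4, 1], so non-medoids have silhouette at
   most 3/4; and one non-medoid does worse, namely 1/2: a point of M outside A
   when m0 is in A (it sees only distances in [1/2, 1]), m0 itself otherwise
   (it sees only distances in [1/4, 1/2]).  Since |A| = |M| the average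
   silhouette of A is strictly smaller. *)

Section MedoidSilhouetteBounds.
Context {R : realType} {T : finType} {d : T -> T -> R} {A : {set T}} {x : T}.

Lemma medoid_dists_sorted : sorted <=%R (medoid_dists d A x).
Proof. exact: (sort_sorted (@le_total _ R)). Qed.

Lemma size_medoid_dists : size (medoid_dists d A x) = #|A|.
Proof. by rewrite size_sort size_map cardE. Qed.

Lemma mem_medoid_dists y :
  reflect (exists2 m, m \in A & y = d x m) (y \in medoid_dists d A x).
Proof.
rewrite mem_sort; apply: (iffP mapP) => -[m]; rewrite ?mem_enum => Am ->;
by exists m; rewrite ?mem_enum.
Qed.

Lemma d1_le m : m \in A -> d1 d A x <= d x m.
Proof.
move=> Am; have : d x m \in medoid_dists d A x by apply/mem_medoid_dists; exists m.
rewrite /d1; move: medoid_dists_sorted; case: medoid_dists => [//|h t] /= sorted_ht.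
rewrite inE => /orP[/eqP <-//|in_t].
by have /allP := order_path_min le_trans sorted_ht; apply.
Qed.

Lemma d1_medoid : (0 < #|A|)%N -> exists2 m, m \in A & d1 d A x = d x m.
Proof. by move=> A_gt0; apply/mem_medoid_dists/mem_nth; rewrite size_medoid_dists. Qed.

Lemma d2_medoid : (1 < #|A|)%N -> exists2 m, m \in A & d2 d A x = d x m.
Proof. by move=> A_gt1; apply/mem_medoid_dists/mem_nth; rewrite size_medoid_dists. Qed.

Lemma d1_ge lo : (0 < #|A|)%N -> (forall m, m \in A -> lo <= d x m) -> lo <= d1 d A x.
Proof. by move=> A_gt0 near; have [m Am ->] := d1_medoid A_gt0; exact: near. Qed.

Lemma d2_le hi : (1 < #|A|)%N -> (forall m, m \in A -> d x m <= hi) -> d2 d A x <= hi.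
Proof. by move=> A_gt1 far; have [m Am ->] := d2_medoid A_gt1; exact: far. Qed.

(* Only [d x m0] may lie below [b]; if [d2] did, so would the entry [d1 <= d2]
   before it in the sorted list. *)
Lemma d2_ge m0 b : (1 < #|A|)%N ->
  (forall m, m \in A -> m != m0 -> b <= d x m) -> b <= d2 d A x.
Proof.
move=> A_gt1 far; rewrite leNgt; apply/negP => d2_lt.
have : (count (< b) (medoid_dists d A x) <= 1)%N.
  rewrite count_sort count_map (@eq_in_count _ _ (fun m => (m == m0) && (d x m < b))).
    apply: leq_trans (sub_count (a2 := pred1 m0) _ _) _; first by move=> m /andP[].
    by rewrite count_uniq_mem ?enum_uniq ?leq_b1.
  move=> m; rewrite mem_enum => Am /=; case: eqVneq => //= ne_m_m0.
  by rewrite ltNge far.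
move: medoid_dists_sorted d2_lt size_medoid_dists A_gt1.
rewrite /d2; case: medoid_dists => [|h [|h' t]] /= sorted_s lt_h'b <- // _.
case/andP: sorted_s => le_hh' _.
by rewrite lt_h'b (le_lt_trans le_hh' lt_h'b).
Qed.

Lemma medoid_silhouette_d1_gt0 :
  0 < d1 d A x -> medoid_silhouette d A x = 1 - d1 d A x / d2 d A x.
Proof. by move=> d1_gt0; rewrite /medoid_silhouette gt_eqF. Qed.

Lemma medoid_silhouette_le lo hi : (1 < #|A|)%N -> 0 < lo ->
  (forall m, m \in A -> lo <= d x m <= hi) -> medoid_silhouette d A x <= 1 - lo / hi.
Proof.
move=> A_gt1 lo_gt0 bounds.
have lo_d1 : lo <= d1 d A x by apply: d1_ge (ltnW A_gt1) _ => m /bounds /andP[].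
have d2_hi : d2 d A x <= hi by apply: d2_le => // m /bounds /andP[].
have d2_gt0 : 0 < d2 d A x.
  by have [m /bounds /andP[lo_dm _] ->] := d2_medoid A_gt1; exact: lt_le_trans lo_dm.
rewrite medoid_silhouette_d1_gt0 ?(lt_le_trans lo_gt0) // lerD2l lerN2.
apply: (@le_trans _ _ (lo / d2 d A x)).
  by rewrite ler_pM2l // lef_pV2 // posrE (lt_le_trans d2_gt0 d2_hi).
by rewrite ler_pM2r ?invr_gt0.
Qed.

Lemma medoid_silhouette_ge m0 a b : (1 < #|A|)%N -> m0 \in A -> 0 < a <= b ->
  d x m0 = a -> (forall m, m \in A -> m != m0 -> b <= d x m) ->
  1 - a / b <= medoid_silhouette d A x.
Proof.
move=> A_gt1 Am0 /andP[a_gt0 le_ab] dm0 far.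
have d1_a : d1 d A x = a.
  apply/eqP; rewrite eq_le -{1}dm0 d1_le //=; apply: d1_ge (ltnW A_gt1) _ => m Am.
  by have [-> | /(far m Am)] := eqVneq m m0; [rewrite dm0 | exact: le_trans].
have b_d2 : b <= d2 d A x by exact: d2_ge far.
rewrite medoid_silhouette_d1_gt0 d1_a // lerD2l lerN2.
by rewrite ler_pM2l // lef_pV2 // posrE (lt_le_trans a_gt0) // (le_trans le_ab).
Qed.

Hypothesis d_ge0 : forall m, m \in A -> 0 <= d x m.

Lemma medoid_silhouette_le1 : medoid_silhouette d A x <= 1.
Proof.
rewrite /medoid_silhouette; case: ifP => // _; rewrite gerBl.
have [A0 | A_gt0] := posnP #|A|.
  by rewrite /d1 nth_default ?mul0r // size_medoid_dists A0.
apply: divr_ge0; first exact: d1_ge.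
have [A_gt1 | A_le1] := ltnP 1 #|A|.
  by have [m Am ->] := d2_medoid A_gt1; exact: d_ge0.
by rewrite /d2 nth_default // size_medoid_dists.
Qed.

Lemma medoid_silhouette_medoid : x \in A -> d x x = 0 -> medoid_silhouette d A x = 1.
Proof.
move=> Ax dxx0; have A_gt0 : (0 < #|A|)%N by apply/card_gt0P; exists x.
have d1_0 : d1 d A x = 0.
  by apply/eqP; rewrite eq_le -{1}dxx0 d1_le // (d1_ge _ A_gt0 d_ge0).
by rewrite /medoid_silhouette d1_0 eqxx mul0r subr0; case: ifP.
Qed.

End MedoidSilhouetteBounds.

Lemma ltr_sum_le_lt {R : numDomainType} {I : finType} {F G : I -> R} {i0 : I} :
  (forall i, F i <= G i) -> F i0 < G i0 -> \sum_i F i < \sum_i G i.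
Proof.
move=> le_FG lt_FG0; rewrite (bigD1 i0) //= [ltRHS](bigD1 i0) //=.
by rewrite ltr_leD // ler_sum.
Qed.

Section RichnessWitness.
Context {R : realType} {T : finType} (M : {set T}) (m0 : T).

Definition hub_dist (z : T) : R := if z \in M then 1/2 else 1/4.

Definition witness_dist (x y : T) : R :=
  if x == y then 0
  else if x == m0 then hub_dist y
  else if y == m0 then hub_dist x
  else 1.

Lemma witness_dist_dissimilarity : dissimilarity witness_dist.
Proof.
rewrite /witness_dist /hub_dist; split=> [x y | x y | x]; last by rewrite eqxx.
  by repeat case: ifP => _; lra.
rewrite [y == x]eq_sym; case: eqVneq => // ne_xy.
case: (eqVneq x m0) => [ex | _]; case: (eqVneq y m0) => [ey | _] //.
by rewrite ex ey eqxx in ne_xy.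
Qed.

Lemma witness_dist_ge0 x y : 0 <= witness_dist x y.
Proof. by case: witness_dist_dissimilarity. Qed.

Lemma witness_dist_bounds x y : x != y -> 1/4 <= witness_dist x y <= 1.
Proof.
by move=> ne_xy; rewrite /witness_dist /hub_dist (negbTE ne_xy);
  repeat case: ifP => _; apply/andP; split; lra.
Qed.

Lemma witness_dist_to_hub x : x != m0 -> witness_dist x m0 = hub_dist x.
Proof. by move=> ne_xm0; rewrite /witness_dist (negbTE ne_xm0) eqxx. Qed.

Lemma witness_dist_from_hub y : y != m0 -> witness_dist m0 y = hub_dist y.
Proof. by move=> ne_ym0; rewrite /witness_dist eq_sym (negbTE ne_ym0) eqxx. Qed.

Lemma witness_dist_off_hub x y : x != y -> x != m0 -> y != m0 -> witness_dist x y = 1.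
Proof. by move=> ne_xy ne_xm0 ne_ym0; rewrite /witness_dist !ifN. Qed.

Definition silhouette_profile (A : {set T}) (x : T) : R := if x \in A then 1 else 3/4.

Lemma sum_silhouette_profile A :
  \sum_x silhouette_profile A x = 3/4 *+ #|T| + #|A|%:R / 4.
Proof.
rewrite (eq_bigr (fun x => 3/4 + (if x \in A then 1 else 0) / 4)); last first.
  by move=> x _; rewrite /silhouette_profile; case: (x \in A); lra.
by rewrite big_split /= sumr_const -[X in _ + X]mulr_suml -big_mkcond /= sumr_const.
Qed.

Hypothesis Mm0 : m0 \in M.

Lemma silhouette_profile_le_witness x :
  (1 < #|M|)%N -> silhouette_profile M x <= medoid_silhouette witness_dist M x.
Proof.
move=> M_gt1; rewrite /silhouette_profile; case: ifPn => [Mx | notMx].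
  rewrite medoid_silhouette_medoid // => [m _|]; first exact: witness_dist_ge0.
  by rewrite /witness_dist eqxx.
have ne_xm m : m \in M -> x != m by move=> Mm; apply: contraNneq notMx => ->.
have -> : 3/4 = 1 - 1/4 / 1 :> R by lra.
apply: (medoid_silhouette_ge _ _ _ M_gt1 Mm0) => [||m Mm ne_mm0]; first by lra.
  by rewrite witness_dist_to_hub ?ne_xm // /hub_dist (negbTE notMx).
by rewrite witness_dist_off_hub ?ne_xm //; apply: ne_xm.
Qed.

Lemma medoid_silhouette_le_profile (A : {set T}) (x : T) :
  (1 < #|A|)%N -> medoid_silhouette witness_dist A x <= silhouette_profile A x.
Proof.
move=> A_gt1; rewrite /silhouette_profile; case: ifPn => [_ | notAx].
  by apply: medoid_silhouette_le1 => m _; exact: witness_dist_ge0.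
have -> : 3/4 = 1 - 1/4 / 1 :> R by lra.
apply: medoid_silhouette_le => // [|m Am]; first by lra.
by apply: witness_dist_bounds; apply: contraNneq notAx => ->.
Qed.

Lemma medoid_silhouette_lt_profile (A : {set T}) :
  (1 < #|A|)%N -> #|A| = #|M| -> A != M ->
  exists x, medoid_silhouette witness_dist A x < silhouette_profile A x.
Proof.
move=> A_gt1 cardA neqAM.
have [Am0 | notAm0] := boolP (m0 \in A).
  have [x Mx notAx] : exists2 x, x \in M & x \notin A.
    apply/subsetPn; apply: contra neqAM => subMA.
    by rewrite eq_sym eqEcard subMA cardA leqnn.
  have ne_xm0 : x != m0 by apply: contraNneq notAx => ->.
  exists x; rewrite /silhouette_profile (negbTE notAx).
  apply: le_lt_trans (medoid_silhouette_le (1/2) 1 A_gt1 _ _) _; [lra | | lra].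
  move=> m Am; have ne_xm : x != m by apply: contraNneq notAx => ->.
  have [-> | ne_mm0] := eqVneq m m0.
    by rewrite witness_dist_to_hub // /hub_dist Mx; apply/andP; split; lra.
  by rewrite witness_dist_off_hub //; apply/andP; split; lra.
exists m0; rewrite /silhouette_profile (negbTE notAm0).
apply: le_lt_trans (medoid_silhouette_le (1/4) (1/2) A_gt1 _ _) _; [lra | | lra].
move=> m Am; have ne_mm0 : m != m0 by apply: contraNneq notAm0 => <-.
by rewrite witness_dist_from_hub // /hub_dist; case: ifP => _; apply/andP; split; lra.
Qed.

End RichnessWitness.

Theorem theorem3 (R : realType) (T : finType) (k : nat) (M : {set T}) :
  (2 <= k)%N -> #|M| = k ->
  exists d : T -> T -> R,
    dissimilarity d /\
    forall M' : {set T}, #|M'| = k -> M' != M ->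
      avg_medoid_silhouette d M' < avg_medoid_silhouette d M.
Proof.
move=> k_ge2 cardM; have M_gt1 : (1 < #|M|)%N by rewrite cardM.
have [m0 Mm0] : exists m0, m0 \in M by apply/card_gt0P; exact: ltnW.
exists (witness_dist M m0); split; first exact: witness_dist_dissimilarity.
move=> A cardA neqAM; have A_gt1 : (1 < #|A|)%N by rewrite cardA.
have [x0 lt_x0] := medoid_silhouette_lt_profile (R := R) M m0 A A_gt1
  (etrans cardA (esym cardM)) neqAM.
rewrite /avg_medoid_silhouette ltr_pM2l ?invr_gt0 ?ltr0n; last first.
  by apply/card_gt0P; exists m0.
have le_A x := medoid_silhouette_le_profile (R := R) M m0 A x A_gt1.
apply: (lt_le_trans (ltr_sum_le_lt le_A lt_x0)).
rewrite sum_silhouette_profile cardA -cardM -sum_silhouette_profile.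
by apply: ler_sum => x _; exact: silhouette_profile_le_witness.
Qed.
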